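(* Let $G$ be a closed, geodesically convex subset of an Alexandrov space $(X,d)$ with $(G,d)$ separable, let $K>0$, let $(\Pi,\mathcal A,\mu)$ be a complete probability space, and let $L:\Pi\to F_K(G)$ be a random lower semi-continuous $K$-convex function. Define $f(x):=\int_\Pi L(a,x)\,d\mu(a)$ for $x\in G$. If there exists an integrable function $\alpha_0:\Pi\to(-\infty,+\infty)$ such that $L(a,x)\ge\alpha_0(a)$ holds almost surely, then $f:G\to(-\infty,+\infty]$ is lower semi-continuous and $K$-convex, and $f(x)>-\infty$ for all $x\in G$.
   Context: $F_K(G)$ denotes the set of lower semi-continuous $K$-convex functions $h:G\to(-\infty,\infty]$ not identically $+\infty$, where $h$ is $K$-convex if $h(x\#_ty)\le(1-t)h(x)+th(y)-\frac K2t(1-t)d(x,y)^2$ for all $x,y\in G$, $t\in[0,1]$ and all minimal geodesics $x\#_ty$ (curves with $d(x\#_sy,x\#_ty)=|s-t|d(x,y)$). A map $L:\Pi\to F_K(G)$, $a\mapsto L(a,\cdot)$, is a random lower semi-continuous $K$-convex function if $(a,x)\mapsto L(a,x)$ is $\mathcal A\otimes\mathcal B(G)$-measurable, $\mathcal B(G)$ being the Borel $\sigma$-algebra of $(G,d)$. *)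

From HB Require Import structures.
From mathcomp Require Import all_boot all_order all_algebra.
From mathcomp Require Import all_classical all_reals all_analysis.
From mathcomp Require Import measurable_realfun.
Set Implicit Arguments.
Unset Strict Implicit.
Unset Printing Implicit Defensive.
Import Order.TTheory GRing.Theory Num.Theory.
Local Open Scope classical_set_scope.
Local Open Scope ring_scope.

Section Defs.
Variable R : realType.
Variable X : Type.
Variable d : X -> X -> R.

Definition is_metric :=
  [/\ (forall x y, 0 <= d x y),
      (forall x y, d x y = 0 <-> x = y),
      (forall x y, d x y = d y x) &
      (forall x y z, d x z <= d x y + d y z)].

Definition cauchy_seq (u : nat -> X) :=
  forall e : R, 0 < e -> exists N, forall n m, (N <= n)%N -> (N <= m)%N ->
    d (u n) (u m) < e.

Definition seq_converges_to (u : nat -> X) (x : X) :=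
  forall e : R, 0 < e -> exists N, forall n, (N <= n)%N -> d (u n) x < e.

Definition metric_complete :=
  forall u : nat -> X, cauchy_seq u -> exists x, seq_converges_to u x.

Definition d_open (U : set X) :=
  forall x, U x -> exists2 e : R, 0 < e & forall y, d x y < e -> U y.

Definition d_closed (C : set X) := d_open (~` C).

Definition d_separable (G : set X) :=
  exists D : set X, [/\ countable D, D `<=` G &
    forall x, G x -> forall e : R, 0 < e -> exists2 y, D y & d x y < e].

(** minimal geodesic from x to y, parametrised on [0,1]:
    d(g s, g t) = |s - t| d(x,y) (this is the curve [t |-> x #_t y]) *)
Definition min_geodesic (x y : X) (g : R -> X) :=
  [/\ g 0 = x, g 1 = y &
      forall s t, 0 <= s <= 1 -> 0 <= t <= 1 -> d (g s) (g t) = `|s - t| * d x y].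

Definition geodesic_space :=
  forall x y, exists g, min_geodesic x y g.

Definition geod_convex (G : set X) :=
  forall x y, G x -> G y ->
    (exists g, min_geodesic x y g) /\
    (forall g, min_geodesic x y g -> forall t, 0 <= t <= 1 -> G (g t)).

(** For a geodesic triangle x, y, z, with m = g t on a minimal geodesic g from y
    to z, the model distance mbar from the vertex to the point at fraction t on
    the opposite side of the comparison triangle in the model plane M_kappa is
    characterised (Stewart's theorem) by
      kappa = 0 : mbar^2 = (1-t) a^2 + t b^2 - t(1-t) D^2
      kappa > 0 : sin(sD) cos(s mbar) = sin((1-t)sD) cos(sa) + sin(tsD) cos(sb)
      kappa < 0 : sinh(sD) cosh(s mbar) = sinh((1-t)sD) cosh(sa) + sinh(tsD) cosh(sb)
    with a = d(x,y), b = d(x,z), D = d(y,z), s = sqrt |kappa|.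
    Since cos is decreasing on [0,pi] and cosh increasing on [0,oo),
    d(x,m) >= mbar  (resp. <=) is expressed as below; for kappa > 0 only
    triangles with perimeter < 2 pi / sqrt kappa are considered. *)
Definition cosh (r : R) : R := (expR r + expR (- r)) / 2.
Definition sinh (r : R) : R := (expR r - expR (- r)) / 2.

(* [side] = true : curvature >= kappa ; [side] = false : curvature <= kappa *)
Definition comparison (side : bool) (kappa : R) (x y z : X) (t : R) (m : X) :=
  let a := d x y in let b := d x z in let D := d y z in let dm := d x m in
  let s := Num.sqrt `|kappa| in
  if kappa == 0 then
    (if side then (1 - t) * a ^+ 2 + t * b ^+ 2 - t * (1 - t) * D ^+ 2 <= dm ^+ 2
     else dm ^+ 2 <= (1 - t) * a ^+ 2 + t * b ^+ 2 - t * (1 - t) * D ^+ 2)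
  else if 0 < kappa then
    (let lhs := sin (s * D) * cos (s * dm) in
     let rhs := sin ((1 - t) * s * D) * cos (s * a) + sin (t * s * D) * cos (s * b) in
     if side then lhs <= rhs else rhs <= lhs)
  else
    (let lhs := sinh (s * D) * cosh (s * dm) in
     let rhs := sinh ((1 - t) * s * D) * cosh (s * a) + sinh (t * s * D) * cosh (s * b) in
     if side then rhs <= lhs else lhs <= rhs).

Definition triangle_comparison (side : bool) (kappa : R) :=
  forall x y z (g : R -> X), min_geodesic y z g ->
    (0 < kappa -> d x y + d y z + d z x < 2 * pi / Num.sqrt kappa) ->
    forall t, 0 <= t <= 1 -> comparison side kappa x y z t (g t).

Definition geodesic_below (kappa : R) :=
  forall x y, (0 < kappa -> d x y < pi / Num.sqrt kappa) ->
    exists g, min_geodesic x y g.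

Definition alexandrov_lower (kappa : R) :=
  [/\ is_metric, metric_complete, geodesic_space & triangle_comparison true kappa].

Definition alexandrov_upper (kappa : R) :=
  [/\ is_metric, metric_complete, geodesic_below kappa &
      triangle_comparison false kappa].

Definition alexandrov_space :=
  exists kappa : R, alexandrov_lower kappa \/ alexandrov_upper kappa.

Local Open Scope ereal_scope.

Definition lsc_on (G : set X) (h : X -> \bar R) :=
  forall x, G x -> forall r : R, r%:E < h x ->
    exists2 e : R, (0 < e)%R & forall y, G y -> (d x y < e)%R -> r%:E < h y.

Definition K_convex_on (K : R) (G : set X) (h : X -> \bar R) :=
  forall x y, G x -> G y -> forall g, min_geodesic x y g ->
    forall t : R, (0 <= t <= 1)%R ->
      h (g t) <= (1 - t)%:E * h x + t%:E * h y
                 - (K / 2 * t * (1 - t) * d x y ^+ 2)%R%:E.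

Definition in_FK (K : R) (G : set X) (h : X -> \bar R) :=
  [/\ forall x, G x -> h x != -oo,
      exists2 x, G x & h x != +oo,
      lsc_on G h &
      K_convex_on K G h].

(** Borel sigma-algebra of (G,d) tensored with A, as a sigma-algebra on the
    subset [setT `*` G] of [Pi * X] *)
Definition prod_borel_sigma {dP} (P : measurableType dP) (G : set X) :
    set (set (P * X)) :=
  <<s setT `*` G, [set A `*` (G `&` U) | A in measurable &
                   U in d_open] >>.

Definition random_FK {dP} (P : measurableType dP) (K : R) (G : set X)
    (L : P -> X -> \bar R) :=
  (forall a, in_FK K G (L a)) /\
  (forall B : set (\bar R), measurable B ->
     @prod_borel_sigma _ P G ((setT `*` G) `&` [set p | B (L p.1 p.2)])).

End Defs.

From HB Require Import structures.
From mathcomp Require Import all_boot all_order all_algebra.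
From mathcomp Require Import all_classical all_reals all_analysis.
From mathcomp Require Import measurable_realfun lra.
Import Order.TTheory GRing.Theory Num.Theory.
Local Open Scope classical_set_scope.
Local Open Scope ring_scope.
Local Open Scope ereal_scope.

(* Since [alpha0 a <= L a x] almost surely, on [G] the function [f] equals
   [x |-> \int h x + \int alpha0] with the nonnegative integrand
   [h x a = max (L a x - alpha0 a) 0].  Fatou's lemma turns the sequential lower
   semicontinuity of each [h ^~ a] into that of [x |-> \int h x]; the
   K-convexity inequality holds almost surely for [h] and integrates, the
   constant [K/2 t (1-t) d(x,y)^2] integrating to itself because [mu] is a
   probability; and [\int h >= 0] gives [f > -oo]. *)

Section ereal_lemmas.
Context {R : realType}.
Implicit Types (u w : \bar R) (v : (\bar R)^nat).

Lemma lee_of_forall_ltEFin u w : (forall s : R, s%:E < u -> s%:E <= w) -> u <= w.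
Proof.
move=> uw; rewrite leNgt; apply/negP => wu.
have [s ws su] : exists2 s : R, w < s%:E & s%:E < u.
  move: wu {uw}; case: w => [r| |]; case: u => [q| |] //=; rewrite ?lte_fin => rq.
  - by exists ((r + q) / 2)%R; rewrite lte_fin; lra.
  - by exists (r + 1)%R; rewrite ?ltry // lte_fin; lra.
  - by exists (q - 1)%R; rewrite ?ltNyr // lte_fin; lra.
  - by exists 0%R; rewrite ?ltNyr ?ltry.
by have := uw s su; rewrite leNgt ws.
Qed.

Lemma limn_einf_le v w : (forall n, v n <= w) -> limn_einf v <= w.
Proof.
move=> vw; rewrite limn_einf_lim; apply: lime_le; first exact: is_cvg_einfs.
by apply: nearW => n; apply: le_trans (vw n); apply: ereal_inf_lbound; exists n => /=.
Qed.

Lemma limn_einf_ge v u :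
  (forall s : R, s%:E < u -> \forall n \near \oo, s%:E < v n) -> u <= limn_einf v.
Proof.
move=> uv; apply: lee_of_forall_ltEFin => s /uv [N _ sv].
rewrite limn_einf_lim; apply: lime_ge; first exact: is_cvg_einfs.
exists N => // n /= Nn; apply: le_ereal_inf_tmp => _ [k /= nk <-].
by apply/ltW/sv; apply: leq_trans nk.
Qed.

Lemma geEFin_neqNy (r : R) u : r%:E <= u -> u != -oo.
Proof. by move=> /(lt_le_trans (ltNyr r)) /gt_eqF ->. Qed.

Lemma convex_ineq_shift (t b c : R) (u v w : \bar R) :
  (0 < t < 1)%R -> u != -oo -> v != -oo -> w != -oo ->
  w <= (1 - t)%:E * u + t%:E * v - c%:E ->
  w + b%:E <= (1 - t)%:E * (u + b%:E) + t%:E * (v + b%:E) - c%:E.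
Proof.
move=> /andP[t0 t1].
have tE : 0 < t%:E by rewrite lte_fin.
have t1E : 0 < (1 - t)%:E by rewrite lte_fin subr_gt0.
case: u => [u| |] // _; case: v => [v| |] // _; case: w => [w| |] // _;
  rewrite ?addye // ?(gt0_muley tE, gt0_muley t1E) ?addye ?addey // ?leey //.
by rewrite -?EFinD -?EFinM -?EFinD -?EFinM -?EFinD ?lee_fin; nra.
Qed.

End ereal_lemmas.

Section lower_semicontinuity.
Context {R : realType} {X : Type} (d : X -> X -> R) (G : set X).
Implicit Type h : X -> \bar R.

Definition approx_seq (x : X) (y : nat -> X) :=
  forall n, G (y n) /\ (d x (y n) < n.+1%:R^-1)%R.

Lemma lsc_on_liminf h x y :
  lsc_on d G h -> G x -> approx_seq x y -> h x <= limn_einf (h \o y).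
Proof.
move=> hlsc Gx xy; apply: limn_einf_ge => s /(hlsc x Gx)[e e0 he].
near=> n; have [Gyn xyn] := xy n; apply: he => //; apply: lt_trans xyn _.
by near: n; exact: (@near_infty_natSinv_lt _ (PosNum e0)).
Unshelve. all: by end_near. Qed.

Lemma liminf_lsc_on h :
  (forall x y, G x -> approx_seq x y -> h x <= limn_einf (h \o y)) ->
  lsc_on d G h.
Proof.
move=> hliminf x Gx r rhx; apply: contrapT => no_ball.
have /choice[y xy] : forall n, exists z, G z /\ (d x z < n.+1%:R^-1)%R /\ h z <= r%:E.
  move=> n; apply: contrapT => no_yn; apply: no_ball.
  exists n.+1%:R^-1%R => // z Gz xz; rewrite ltNge; apply/negP => hzr.
  by apply: no_yn; exists z.
have hyr : limn_einf (h \o y) <= r%:E by apply: limn_einf_le => n; case: (xy n) => _ [].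
have := le_trans (hliminf x y Gx (fun n => conj (xy n).1 (xy n).2.1)) hyr.
by rewrite leNgt rhx.
Qed.

Lemma lsc_on_excess h c :
  lsc_on d G h -> lsc_on d G (fun x => maxe (h x - c%:E) 0).
Proof.
move=> hlsc x Gx r; rewrite lt_max => /orP[|r0]; last first.
  by exists 1%R => // y _ _; rewrite lt_max r0 orbT.
rewrite lteBrDr // -EFinD => /(hlsc x Gx)[e e0 he].
by exists e => // y Gy xy; rewrite lt_max lteBrDr // -EFinD he.
Qed.

Lemma lsc_on_eq_addEFin h f c :
  (forall x, G x -> f x = h x + c%:E) -> lsc_on d G h -> lsc_on d G f.
Proof.
move=> fE hlsc x Gx r; rewrite fE // -lteBlDr // -EFinB => /(hlsc x Gx)[e e0 he].
by exists e => // y Gy xy; rewrite fE // -lteBlDr // he.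
Qed.

End lower_semicontinuity.

Section random_function_measurability.
Context {R : realType} {X : Type} (d : X -> X -> R) (G : set X).
Context {dP : measure_display} {Pi : measurableType dP}.

Lemma prod_borel_sigma_section {x S} : G x ->
  @prod_borel_sigma _ _ d _ Pi G S -> measurable [set a | S (a, x)].
Proof.
move=> Gx SG.
apply: (@smallest_sub _ _ _ [set S | measurable [set a | S (a, x)]] _ _ S SG); last first.
  move=> _ [A mA [U oU <-]] /=.
  have [GUx|GUNx] := pselect ((G `&` U) x).
    by rewrite (_ : [set a | _] = A) //; apply/seteqP; split => a /=; [case|].
  by rewrite (_ : [set a | _] = set0) //; apply/seteqP; split => a //=; case.
split => /=.
- by rewrite (_ : [set a | _] = set0).
- move=> A mA; rewrite (_ : [set a | _] = ~` [set a | A (a, x)]).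
    exact: measurableC.
  by apply/seteqP; split => a /=; [case=> _ ?|move=> nA; split].
- move=> F mF; rewrite (_ : [set a | _] = \bigcup_k [set a | F k (a, x)]).
    exact: bigcupT_measurable.
  by apply/seteqP; split => a /=.
Qed.

Lemma random_FK_measurable (K : R) (L : Pi -> X -> \bar R) x :
  random_FK d K G L -> G x -> measurable_fun setT (fun a => L a x).
Proof.
move=> [_ Lmeas] Gx _ B mB; rewrite setTI.
have := prod_borel_sigma_section Gx (Lmeas B mB).
rewrite (_ : [set a | _] = (fun a => L a x) @^-1` B) //.
by apply/seteqP; split => a /=; [case|].
Qed.

End random_function_measurability.

Section integral_lemmas.
Context {R : realType} {dT : measure_display} {T : measurableType dT}.

Lemma ge0_integralD_integrable (mu : {measure set T -> \bar R})
    (h : T -> \bar R) (g : T -> R) :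
  measurable_fun setT h -> (forall a, 0 <= h a) -> mu.-integrable setT (EFin \o g) ->
  \int[mu]_a (h a + (g a)%:E) = \int[mu]_a h a + \int[mu]_a (g a)%:E.
Proof.
move=> mh h0 ig; have mg := measurable_int _ ig.
have [hfin|] := ltP (\int[mu]_a h a) +oo.
  have ih : mu.-integrable setT h.
    by apply/integrableP; split => //; under eq_integral do rewrite gee0_abs //.
  exact: integralD.
rewrite leye_eq => /eqP hoo; rewrite hoo addye; last first.
  by case/fin_numP: (integrable_fin_num measurableT ig).
set F := fun a => h a + (g a)%:E.
have mF : measurable_fun setT F by apply: emeasurable_funD.
have gNfin := integrable_neg_fin_num measurableT ig.
have FN_le_gN a : F^\- a <= (EFin \o g)^\- a.
  by apply: (@funeneg_le _ _ setT) => [b _|]; rewrite ?in_setT // leeDr.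
have FNfin : \int[mu]_a F^\- a \is a fin_num.
  rewrite ge0_fin_numE; last exact: integral_ge0.
  apply: le_lt_trans (integral_funeneg_lt_pinfty measurableT ig).
  by apply: ge0_le_integral => //; exact: measurable_funeneg.
have FPoo : \int[mu]_a F^\+ a = +oo.
  have mFP := measurable_funepos mF; have mgN := measurable_funeneg mg.
  have h_le a : h a <= F^\+ a + (EFin \o g)^\- a.
    rewrite -[h a](@addeK _ (g a)%:E) //; apply: leeD.
      by rewrite funeposE le_max lexx.
    by rewrite funenegE le_max lexx.
  have := ge0_le_integral mu measurableT (fun a _ => h0 a) mh
    (emeasurable_funD mFP mgN) (fun a _ => h_le a).
  rewrite ge0_integralD // hoo -(fineK gNfin).
  by case: (\int[mu]_a F^\+ a).
by rewrite integralE FPoo -(fineK FNfin).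
Qed.

Lemma ge0_integral_convex_comb_le (mu : probability T R) {u v w : T -> \bar R} {t c : R} :
  (0 <= t <= 1)%R -> (0 <= c)%R ->
  measurable_fun setT u -> measurable_fun setT v -> measurable_fun setT w ->
  (forall a, 0 <= u a) -> (forall a, 0 <= v a) -> (forall a, 0 <= w a) ->
  {ae mu, forall a, w a + c%:E <= (1 - t)%:E * u a + t%:E * v a} ->
  \int[mu]_a w a + c%:E <= (1 - t)%:E * \int[mu]_a u a + t%:E * \int[mu]_a v a.
Proof.
move=> /andP[t0 t1] c0 mu_ mv mw u0 v0 w0 ae_le.
have t0E : 0 <= t%:E by rewrite lee_fin.
have t1E : 0 <= (1 - t)%:E by rewrite lee_fin subr_ge0.
have c0E : 0 <= c%:E by rewrite lee_fin.
have -> : c%:E = \int[mu]_a c%:E.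
  rewrite integral_cst //; transitivity (c%:E * 1); first by rewrite mule1.
  by congr (_ * _); exact/esym/probability_setT.
have mZu : measurable_fun setT (fun a => (1 - t)%:E * u a) :=
  emeasurable_funM (measurable_cst _) mu_.
have mZv : measurable_fun setT (fun a => t%:E * v a) :=
  emeasurable_funM (measurable_cst _) mv.
have Zu0 a : 0 <= (1 - t)%:E * u a by rewrite mule_ge0.
have Zv0 a : 0 <= t%:E * v a by rewrite mule_ge0.
rewrite -(ge0_integralD mu measurableT (fun a _ => w0 a) mw (fun _ _ => c0E)) //.
rewrite -(ge0_integralZl mu measurableT mu_ (fun a _ => u0 a) t1E).
rewrite -(ge0_integralZl mu measurableT mv (fun a _ => v0 a) t0E).
rewrite -(ge0_integralD mu measurableT (fun a _ => Zu0 a) mZu (fun a _ => Zv0 a) mZv).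
apply: ae_ge0_le_integral => //.
- by move=> a _; rewrite adde_ge0.
- exact: emeasurable_funD.
- by move=> a _; rewrite adde_ge0.
- exact: emeasurable_funD.
- by apply: filterS ae_le => a + _.
Qed.

End integral_lemmas.

Lemma lsc_on_integral {R : realType} {X : Type} (d : X -> X -> R) (G : set X)
    {dP : measure_display} {Pi : measurableType dP} (mu : {measure set Pi -> \bar R})
    (F : X -> Pi -> \bar R) :
  (forall x, G x -> measurable_fun setT (F x)) -> (forall x a, 0 <= F x a) ->
  (forall a, lsc_on d G (F ^~ a)) -> lsc_on d G (fun x => \int[mu]_a F x a).
Proof.
move=> mF F0 Flsc; apply: liminf_lsc_on => x y Gx xy.
have mFy n : measurable_fun setT (F (y n)) := mF _ (xy n).1.
have mliminf : measurable_fun setT (fun a => limn_einf (fun n => F (y n) a)).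
  apply: measurableT_comp (measurable_fun_limn_esup _) => // n.
  exact: measurableT_comp.
apply: le_trans (@fatou _ _ _ mu setT measurableT _ mFy (fun n a _ => F0 _ a)) => /=.
apply: ge0_le_integral (mF x Gx) mliminf _ => // a _.
exact: lsc_on_liminf (Flsc a) Gx xy.
Qed.

Section integral_of_random_function.
Context {R : realType} {X : Type} {d : X -> X -> R} {G : set X}.
Context {dP : measure_display} {Pi : measurableType dP} {mu : probability Pi R}.
Context {L : Pi -> X -> \bar R} {alpha0 : Pi -> R}.
Hypothesis mL : forall x, G x -> measurable_fun setT (fun a => L a x).
Hypothesis alpha0_int : mu.-integrable setT (EFin \o alpha0).
Hypothesis alpha0_le : forall x, G x -> {ae mu, forall a, (alpha0 a)%:E <= L a x}.

Let excess x a := maxe (L a x - (alpha0 a)%:E) 0.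

Let excess_ge0 x a : 0 <= excess x a.
Proof. by rewrite /excess le_max lexx orbT. Qed.

Let measurable_excess x : G x -> measurable_fun setT (excess x).
Proof.
move=> Gx; apply: measurable_maxe => //; apply: emeasurable_funB; first exact: mL.
exact: measurable_int alpha0_int.
Qed.

Let excessE x a : (alpha0 a)%:E <= L a x -> excess x a = L a x - (alpha0 a)%:E.
Proof. by move=> aL; apply/max_idPl; rewrite suber_ge0. Qed.

Let c := fine (\int[mu]_a (alpha0 a)%:E).

Let integral_excess x : G x -> \int[mu]_a L a x = \int[mu]_a excess x a + c%:E.
Proof.
move=> Gx; rewrite /c fineK; last exact: integrable_fin_num.
rewrite -ge0_integralD_integrable //; last exact: measurable_excess.
apply: ae_eq_integral => //.
- exact: mL.
- by apply: emeasurable_funD; [exact: measurable_excess|exact: measurable_int alpha0_int].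
- by apply: filterS (alpha0_le x Gx) => a aL _; rewrite excessE // subeK.
Qed.

Lemma lsc_on_integral_random :
  (forall a, lsc_on d G (L a)) -> lsc_on d G (fun x => \int[mu]_a L a x).
Proof.
move=> Llsc; apply: (lsc_on_eq_addEFin d G _ _ c integral_excess).
by apply: lsc_on_integral => // a; exact: lsc_on_excess.
Qed.

Lemma K_convex_on_integral_random (K : R) : (0 <= K)%R -> geod_convex d G ->
  (forall a, K_convex_on d K G (L a)) ->
  K_convex_on d K G (fun x => \int[mu]_a L a x).
Proof.
move=> K0 Gconv Lcvx x y Gx Gy g xyg t t01.
(* The endpoints are treated apart: there [0 * +oo = 0] breaks the shift. *)
have [->|t_neq0] := eqVneq t 0%R.
  case: xyg => -> _ _.
  by rewrite subr0 mul1e mul0e adde0 mulr0 mul0r mul0r oppe0 adde0.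
have [->|t_neq1] := eqVneq t 1%R.
  case: xyg => _ -> _.
  by rewrite subrr mul1e mul0e add0e !mulr0 mul0r oppe0 adde0.
have t01' : (0 < t < 1)%R.
  by case/andP: t01 => t0 t1; rewrite !lt_neqAle eq_sym t_neq0 t_neq1 t0 t1.
have Gz := (Gconv x y Gx Gy).2 g xyg t t01.
set cK := (K / 2 * t * (1 - t) * d x y ^+ 2)%R.
have cK0 : (0 <= cK)%R.
  case/andP: t01 => t0 t1.
  by rewrite /cK mulr_ge0 ?sqr_ge0 // !mulr_ge0 ?divr_ge0 ?subr_ge0.
have excess_cvx : {ae mu, forall a,
    excess (g t) a + cK%:E <= (1 - t)%:E * excess x a + t%:E * excess y a}.
  apply: (filterS3 _ _ (alpha0_le x Gx) (alpha0_le y Gy) (alpha0_le _ Gz)) => a ax ay az.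
  rewrite !excessE // -leeBrDr // -!EFinN.
  apply: convex_ineq_shift => //; last exact: Lcvx.
  - exact: geEFin_neqNy ax.
  - exact: geEFin_neqNy ay.
  - exact: geEFin_neqNy az.
have := ge0_integral_convex_comb_le mu t01 cK0 (measurable_excess x Gx)
  (measurable_excess y Gy) (measurable_excess _ Gz) (excess_ge0 x) (excess_ge0 y)
  (excess_ge0 (g t)) excess_cvx.
rewrite !integral_excess // -leeBrDr // => /convex_ineq_shift; apply => //;
  exact: geEFin_neqNy (integral_ge0 _ _).
Qed.

Lemma integral_random_neqNy x : G x -> \int[mu]_a L a x != -oo.
Proof.
move=> Gx; rewrite integral_excess //.
have : 0 <= \int[mu]_a excess x a by apply: integral_ge0 => a _.
by case: (\int[mu]_a excess x a).
Qed.

End integral_of_random_function.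

Theorem lemma6p2 (R : realType) (X : Type) (d : X -> X -> R)
  (G : set X) (K : R)
  (dP : measure_display) (Pi : measurableType dP) (mu : probability Pi R)
  (L : Pi -> X -> \bar R) (alpha0 : Pi -> R) :
  alexandrov_space d ->
  d_closed d G -> geod_convex d G -> d_separable d G ->
  (0 < K)%R ->
  measure_is_complete mu ->
  random_FK d K G L ->
  mu.-integrable setT (EFin \o alpha0) ->
  (forall x, G x -> {ae mu, forall a, (alpha0 a)%:E <= L a x}) ->
  let f := fun x => \int[mu]_a L a x in
  [/\ lsc_on d G f, K_convex_on d K G f & forall x, G x -> f x != -oo].
Proof.
move=> _ _ Gconv _ K0 _ LFK alpha0_int alpha0_le f.
have mL x : G x -> measurable_fun setT (fun a => L a x).
  exact: random_FK_measurable LFK.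
split.
- by apply: (lsc_on_integral_random mL alpha0_int alpha0_le) => a; case: (LFK.1 a).
- apply: (K_convex_on_integral_random mL alpha0_int alpha0_le K (ltW K0) Gconv).
  by move=> a; case: (LFK.1 a).
- exact: integral_random_neqNy mL alpha0_int alpha0_le.
Qed.
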